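(* Let $\psi$ be the SC decoder and $\Psi$ the SSC decoder (with arbitrary, not necessarily ordered, index sets). Then $$\Pr\big(\psi(A\mathbf X,\mathbf Y)\neq\mathbf X\big)\le\frac{1}{2\log 2}\sum_{i\in\mathcal I_0}H(C_i\mid C_1^{i-1},\mathbf Y),$$ $$\Pr\big(\Psi(A\mathbf X,\mathbf Y)\neq\mathbf X\big)\le\frac{1}{\log 2}\sum_{i\in\mathcal I_0}H(C_i\mid C_1^{i-1},\mathbf Y),$$ where all logarithms (in $\log 2$ and in the entropies) are to base $|\mathcal X|$.
   Context: Setup: $\mathcal X,\mathcal Y$ finite, $|\mathcal X|\ge2$; $(\mathbf X,\mathbf Y)$ random on $\mathcal X^n\times\mathcal Y^n$; $A:\mathcal X^n\to\mathcal X^l$; $\{\mathcal I_0,\mathcal I_1\}$ a partition of $\{1,\dots,n\}$ with $|\mathcal I_1|=l$; $B:\mathcal X^n\to\mathcal X^{n-l}$ such that $T:\mathcal X^n\to\mathcal X^n$ is bijective, where $T(x)$ is the vector $c$ whose entries on $\mathcal I_1$ (increasing order) form $Ax$ and whose entries on $\mathcal I_0$ (increasing order) form $Bx$. Notation: $c_i^j=(c_i,\dots,c_j)$, $c_{\mathcal I_1}$ the subvector on $\mathcal I_1$. Extended codeword: $\mathbf C=(C_1,\dots,C_n)=T(\mathbf X)$. SC decoder: for $i\in\mathcal I_0$, $f_i(c_1^{i-1},y)\in\arg\max_{a}\mu_{C_i\mid C_1^{i-1}\mathbf Y}(a\mid c_1^{i-1},y)$ (ties/zero-probability conditions by a fixed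 rule). Given $(u,y)$, build $\hat c$ for $i=1,\dots,n$: $\hat c_{\mathcal I_1}=u$, and $\hat c_i=f_i(\hat c_1^{i-1},y)$ for $i\in\mathcal I_0$; $\psi(u,y)=T^{-1}(\hat c)$. SSC decoder: same recursion, except that for $i\in\mathcal I_0$, $\hat c_i$ is drawn at random according to $\mu_{C_i\mid C_1^{i-1}\mathbf Y}(\cdot\mid\hat c_1^{i-1},y)$ (fixed arbitrary distribution if the condition has probability zero); $\Psi(u,y)=T^{-1}(\hat c)$. *)

From Stdlib Require Import Reals.
From mathcomp Require Import all_boot.
Set Implicit Arguments.
Unset Strict Implicit.
Unset Printing Implicit Defensive.

Section Polar.
Variables (X Y : finType) (n : nat).
(* the joint law of (X, Y) on X^n x Y^n *)
Variable mu : {ffun 'I_n -> X} -> {ffun 'I_n -> Y} -> R.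
(* the bijection T : x |-> extended codeword *)
Variable T : {ffun 'I_n -> X} -> {ffun 'I_n -> X}.
(* the frozen index set I_1 (I_0 is its complement) *)
Variable I1 : {set 'I_n}.

Definition rsum (I : finType) (P : pred I) (F : I -> R) : R :=
  \big[Rplus/R0]_(i | P i) F i.
Definition rprod (I : finType) (P : pred I) (F : I -> R) : R :=
  \big[Rmult/R1]_(i | P i) F i.

(* c_1^{i-1} as a sequence (indices j < i, increasing) *)
Definition prefix (c : {ffun 'I_n -> X}) (i : 'I_n) : seq X :=
  [seq c j | j : 'I_n <- enum 'I_n & (nat_of_ord j < nat_of_ord i)%N].

(* P(C_1^{i-1} = s, Y = y) *)
Definition Pr_pref (i : 'I_n) (s : seq X) (y : {ffun 'I_n -> Y}) : R :=
  rsum predT (fun x => if prefix (T x) i == s then mu x y else R0).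

(* P(C_1^{i-1} = s, C_i = a, Y = y) *)
Definition Pr_pref_a (i : 'I_n) (s : seq X) (a : X) (y : {ffun 'I_n -> Y}) : R :=
  rsum predT (fun x => if (prefix (T x) i == s) && (T x i == a) then mu x y else R0).

(* mu_{C_i | C_1^{i-1} Y}(a | s, y) *)
Definition cond (i : 'I_n) (a : X) (s : seq X) (y : {ffun 'I_n -> Y}) : R :=
  Pr_pref_a i s a y / Pr_pref i s y.

Definition logX (z : R) : R := ln z / ln (INR #|X|).

(* H(C_i | C_1^{i-1}, Y) in base |X| *)
Definition Hcond (i : 'I_n) : R :=
  rsum predT (fun x => rsum predT (fun y =>
    Rmult (mu x y) (Ropp (logX (cond i (T x i) (prefix (T x) i) y))))).

(* SC decoder: f i s y is the decision for position i given hat c_1^{i-1} = s.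
   Output hat c as a sequence built for i = 1..n. *)
Definition sc_hat (l : nat) (f : 'I_n -> seq X -> {ffun 'I_n -> Y} -> X)
    (u : {ffun 'I_l -> X}) (y : {ffun 'I_n -> Y}) : seq X :=
  foldl (fun s i =>
    rcons s (if i \in I1 then nth (f i s y) (codom u) (index i (enum I1))
             else f i s y)) [::] (enum 'I_n).

Definition seq_to_vec (x0 : X) (s : seq X) : {ffun 'I_n -> X} :=
  [ffun j : 'I_n => nth x0 s (nat_of_ord j)].

Definition sc_dec (Tinv : {ffun 'I_n -> X} -> {ffun 'I_n -> X}) (x0 : X) (l : nat)
    (f : 'I_n -> seq X -> {ffun 'I_n -> Y} -> X)
    (u : {ffun 'I_l -> X}) (y : {ffun 'I_n -> Y}) : {ffun 'I_n -> X} :=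
  Tinv (seq_to_vec x0 (sc_hat f u y)).

(* SSC: law used to draw hat c_i, with fallback g when the condition has probability 0 *)
Definition ssc_step (g : 'I_n -> seq X -> {ffun 'I_n -> Y} -> X -> R)
    (i : 'I_n) (a : X) (s : seq X) (y : {ffun 'I_n -> Y}) : R :=
  if Req_EM_T (Pr_pref i s y) R0 then g i s y a else cond i a s y.

(* probability that the SSC decoder produces hat c = c on input (u, y)
   (chain rule of the sequential random draws) *)
Definition ssc_law (g : 'I_n -> seq X -> {ffun 'I_n -> Y} -> X -> R) (l : nat)
    (u : {ffun 'I_l -> X}) (y : {ffun 'I_n -> Y}) (c : {ffun 'I_n -> X}) : R :=
  (if [seq c i | i <- enum I1] == codom u then R1 else R0) *
  rprod (fun i => i \notin I1) (fun i => ssc_step g i (c i) (prefix c i) y).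

(* P(Psi(u, y) <> x) with Psi(u,y) = T^{-1}(hat c) *)
Definition ssc_err (Tinv : {ffun 'I_n -> X} -> {ffun 'I_n -> X})
    (g : 'I_n -> seq X -> {ffun 'I_n -> Y} -> X -> R) (l : nat)
    (u : {ffun 'I_l -> X}) (y : {ffun 'I_n -> Y}) (x : {ffun 'I_n -> X}) : R :=
  rsum predT (fun c => if Tinv c != x then ssc_law g u y c else R0).

End Polar.

From HB Require Import structures.
From Pilot Require Import Defs.
From Stdlib Require Import Reals Lra.
From mathcomp Require Import all_boot.
Set Implicit Arguments.
Unset Strict Implicit.
Local Open Scope R_scope.

(* Both bounds reduce, by a union bound over the positions of I_0, to
   per-position estimates along the TRUE prefix C_1^{i-1}:
   - SC: the decoder succeeds whenever every MAP decision on I_0 is right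
     (sc_dec_correct); on each cell {C_1^{i-1} = s, Y = y} the MAP guess misses
     at most H / (2 ln 2) of the mass (map_error_le_entropy).  The latter is a
     statement about a single finite distribution q with largest mass m:
     Gibbs' inequality gives H(q) >= - ln (sum q^2), and sum q^2 <= m,
     sum q^2 <= m^2 + (1 - m)^2 give - ln (sum q^2) >= 2 ln 2 (1 - m).
   - SSC: the law of the decoder output is a product of sequential draws,
     hence normalised (chain_sum); the error is 1 - prod q_i over I_0, which
     the Weierstrass inequality bounds by sum (1 - q_i) <= sum (- ln q_i),
     and - ln q <= - ln q / ln 2.
   The file develops finite real sums, the logarithmic and distributional
   inequalities, the normalisation of sequential laws, the per-position
   estimates, the decoder-level bounds, and finally converts natural
   logarithms to base |X| to obtain lemma4. *)

Lemma Rplus_assoc_law : associative Rplus. Proof. by move=> x y z; ring. Qed.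
Lemma Rplus_comm_law : commutative Rplus. Proof. by move=> x y; ring. Qed.
Lemma Rplus_0_law : left_id R0 Rplus. Proof. by move=> x; ring. Qed.
HB.instance Definition _ :=
  Monoid.isComLaw.Build R R0 Rplus Rplus_assoc_law Rplus_comm_law Rplus_0_law.
Lemma Rmult_assoc_law : associative Rmult. Proof. by move=> x y z; ring. Qed.
Lemma Rmult_comm_law : commutative Rmult. Proof. by move=> x y; ring. Qed.
Lemma Rmult_1_law : left_id R1 Rmult. Proof. by move=> x; ring. Qed.
HB.instance Definition _ :=
  Monoid.isComLaw.Build R R1 Rmult Rmult_assoc_law Rmult_comm_law Rmult_1_law.

Section RealSums.
Variable I : finType.
Implicit Types (P : pred I) (F G : I -> R).

Lemma rsum_le P F G : (forall i, P i -> F i <= G i) -> rsum P F <= rsum P G.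
Proof.
move=> hFG; rewrite /rsum; elim/big_rec2: _ => [|i a b Pi hab]; first lra.
by have := hFG i Pi; lra.
Qed.

Lemma rsum_ge0 P F : (forall i, P i -> 0 <= F i) -> 0 <= rsum P F.
Proof.
move=> hF; rewrite /rsum; elim/big_rec: _ => [|i a Pi ha]; first lra.
by have := hF i Pi; lra.
Qed.

Lemma rsum_eq P F G : (forall i, P i -> F i = G i) -> rsum P F = rsum P G.
Proof. exact: eq_bigr. Qed.

Lemma rsum_mull c P F : c * rsum P F = rsum P (fun i => c * F i).
Proof. by rewrite /rsum; elim/big_rec2: _ => [|i a b Pi <-]; ring. Qed.

Lemma rsum_add P F G : rsum P (fun i => F i + G i) = rsum P F + rsum P G.
Proof. by rewrite /rsum big_split. Qed.

Lemma rsum_sub P F G : rsum P (fun i => F i - G i) = rsum P F - rsum P G.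
Proof.
rewrite /Rminus rsum_add; congr (_ + _).
by rewrite /rsum; elim/big_rec2: _ => [|i a b Pi ->]; ring.
Qed.

Lemma rsum0 P : rsum P (fun _ => 0) = 0.
Proof. by rewrite /rsum big1. Qed.

Lemma rsum_term_le P F i0 :
  P i0 -> (forall i, P i -> 0 <= F i) -> F i0 <= rsum P F.
Proof.
move=> Pi0 hF; rewrite /rsum (bigD1 i0) //=.
suff : 0 <= \big[Rplus/R0]_(i | P i && (i != i0)) F i by lra.
by elim/big_rec: _ => [|i a /andP[Pi _] ha]; [lra | have := hF i Pi; lra].
Qed.

Lemma rsum_delta (e : I) (v : R) :
  rsum predT (fun a => if e == a then v else 0) = v.
Proof.
rewrite /rsum (bigD1 e) //= eqxx big1 ?Rplus_0_r // => a hae.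
by rewrite eq_sym (negbTE hae).
Qed.

Lemma rsum_drop_one (e : I) F :
  rsum predT F - F e = rsum predT (fun a => if e != a then F a else 0).
Proof.
rewrite /rsum (bigD1 e) //= [in RHS](bigD1 e) //= eqxx /=.
rewrite [X in _ = _ + X](eq_bigr F); first by ring.
by move=> a hae; rewrite eq_sym hae.
Qed.
End RealSums.

Lemma rsum_exchange (I J : finType) (P : pred I) (F : I -> J -> R) :
  rsum P (fun i => rsum predT (fun j => F i j)) =
  rsum predT (fun j => rsum P (fun i => F i j)).
Proof. by rewrite /rsum exchange_big. Qed.

Lemma rsum_le_by_cells (I : finType) (K : eqType) (key : I -> K) (F G : I -> R) :
  (forall k, rsum predT (fun x => if key x == k then F x else 0) <=
             rsum predT (fun x => if key x == k then G x else 0)) ->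
  rsum predT F <= rsum predT G.
Proof.
move=> hcell; set S := undup (map key (enum I)).
have cells H : rsum predT H =
    \big[Rplus/R0]_(k <- S) rsum predT (fun x => if key x == k then H x else 0).
  rewrite /rsum exchange_big /=; apply: eq_bigr => x _.
  rewrite (bigD1_seq (key x)) ?undup_uniq ?mem_undup ?map_f ?mem_index_enum //=.
  by rewrite eqxx big1 ?Rplus_0_r // => k hk; rewrite eq_sym (negbTE hk).
rewrite !cells; elim/big_rec2: _ => [|k a b _ hab]; first lra.
by have := hcell k; lra.
Qed.

Lemma ln_le_sub1 x : 0 < x -> ln x <= x - 1.
Proof. by move=> hx; have := exp_ineq1_le (ln x); rewrite exp_ln //; lra. Qed.

Lemma ln_le x y : 0 < x -> x <= y -> ln x <= ln y.
Proof. by move=> hx [hxy|->]; [left; apply: ln_increasing | lra]. Qed.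

Lemma ln2_bounds : 0 < ln 2 < 1.
Proof.
split; first by have := ln_lt_2; lra.
rewrite -(ln_exp 1); apply: ln_increasing; first lra.
by have := exp_ineq1 1 ltac:(lra); lra.
Qed.

(* The scalar heart of the SC bound: a collision probability [Z] of a
   distribution whose largest mass is [m] satisfies [Z <= m] and
   [Z <= m^2 + (1-m)^2]; either estimate yields [-ln Z >= 2 ln 2 (1 - m)]. *)
Lemma neg_ln_collision_ge m Z :
  0 < Z -> Z <= m -> Z <= m * m + (1 - m) * (1 - m) -> m <= 1 ->
  2 * ln 2 * (1 - m) <= - ln Z.
Proof.
move=> hZ hZm hZsq hm1; have [l0 l1] := ln2_bounds.
case: (Rle_lt_dec m (/2)) => hm.
- (* small maximum: ln Z <= ln m <= 2m - 1 - ln 2 *)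
  have hlnZ := ln_le hZ hZm.
  have h2m := @ln_le_sub1 (2 * m) ltac:(lra).
  rewrite ln_mult in h2m; try lra.
  nra.
- (* large maximum, r := 1 - m in [0, 1/2]: bound ln u with u := 1 - 2r + 2r^2 *)
  set r := 1 - m in hZsq *.
  set u := 1 - 2 * r + 2 * (r * r).
  have hZu : Z <= u by apply: (Rle_trans _ _ _ hZsq); right; rewrite /u /r; ring.
  have hu : 0 < u by lra.
  have hlnZ := ln_le hZ hZu.
  have hr0 : 0 <= r by rewrite /r; lra.
  have hr1 : r <= /2 by rewrite /r; lra.
  suff : ln u <= - (2 * ln 2 * r) by rewrite /r; lra.
  case: (Rle_lt_dec r (1 - ln 2)) => hr.
  + have := ln_le_sub1 hu; rewrite /u; nra.
  + have h2u := @ln_le_sub1 (2 * u) ltac:(lra).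
    rewrite ln_mult in h2u; try lra.
    rewrite /u in h2u *; nra.
Qed.

Section Distribution.
Variable X : finType.
Implicit Types (q p : X -> R).

(* Gibbs' inequality against the size-biased law: the Shannon entropy
   (in nats) of a distribution dominates minus the log of its collision
   probability. *)
Lemma entropy_ge_neg_ln_collision q :
  (forall a, 0 <= q a) -> rsum predT q = 1 ->
  let Z := rsum predT (fun a => q a * q a) in
  0 < Z /\ - ln Z <= rsum predT (fun a => q a * - ln (q a)).
Proof.
move=> q_ge0 q_sum1 Z.
have hZ : 0 < Z.
  have Z_ge0 : 0 <= Z by apply: rsum_ge0 => a _; have := q_ge0 a; nra.
  case: Z_ge0 => // Z0; exfalso.
  have q0 a : q a = 0.
    have : q a * q a <= Z.
      by apply: (@rsum_term_le _ predT _ a) => // b _; have := q_ge0 b; nra.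
    by rewrite -Z0; nra.
  by move: q_sum1; rewrite (rsum_eq (G := fun _ => 0)) ?rsum0 //; lra.
split=> //.
(* termwise: q (ln q - ln Z) <= q (q / Z - 1), and the right side sums to 0 *)
have hterm a : q a * ln (q a) - q a * ln Z <= q a * (q a / Z) - q a.
  case: (q_ge0 a) => hq; last by rewrite -hq; lra.
  have := @ln_le_sub1 (q a / Z) ltac:(apply: Rdiv_lt_0_compat; lra).
  rewrite /Rdiv ln_mult ?ln_Rinv; try apply: Rinv_0_lt_compat; try lra.
  nra.
have sum_rhs : rsum predT (fun a => q a * (q a / Z) - q a) = 0.
  rewrite rsum_sub q_sum1 (rsum_eq (G := fun a => / Z * (q a * q a))).
    by rewrite -rsum_mull Rinv_l; lra.
  by move=> a _; field; lra.
have sum_lhs : rsum predT (fun a => q a * ln (q a) - q a * ln Z) =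
    - rsum predT (fun a => q a * - ln (q a)) - ln Z.
  rewrite rsum_sub (rsum_eq (F := fun a => q a * ln Z) (G := fun a => ln Z * q a)).
    rewrite -rsum_mull q_sum1 (rsum_eq (G := fun a => -1 * (q a * - ln (q a)))).
      by rewrite -rsum_mull; ring.
    by move=> a _; ring.
  by move=> a _; ring.
have := rsum_le (P := predT) (fun a _ => hterm a).
rewrite sum_lhs sum_rhs; lra.
Qed.
Lemma collision_le_max q f :
  (forall a, 0 <= q a) -> rsum predT q = 1 -> (forall a, q a <= q f) ->
  let Z := rsum predT (fun a => q a * q a) in
  Z <= q f /\ Z <= q f * q f + (1 - q f) * (1 - q f).
Proof.
move=> q_ge0 q_sum1 q_max Z; split.
  rewrite -[q f]Rmult_1_r -q_sum1 rsum_mull; apply: rsum_le => a _.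
  by apply: Rmult_le_compat_r; [apply: q_ge0 | apply: q_max].
have others a : f != a -> q a <= 1 - q f.
  move=> hfa; rewrite -q_sum1 rsum_drop_one.
  have := @rsum_term_le _ predT (fun b => if f != b then q b else 0) a isT.
  by rewrite hfa; apply=> b _; case: (f != b); [exact: q_ge0 | lra].
suff : Z - q f * q f <= (1 - q f) * (rsum predT q - q f) by rewrite q_sum1; lra.
rewrite /Z (rsum_drop_one f (fun a => q a * q a)) rsum_drop_one rsum_mull.
apply: rsum_le => a _; case: (boolP (f != a)) => hfa; last lra.
have := others a hfa; have := q_ge0 a; nra.
Qed.

Lemma map_error_entropy_normalized q f :
  (forall a, 0 <= q a) -> rsum predT q = 1 -> (forall a, q a <= q f) ->
  2 * ln 2 * (1 - q f) <= rsum predT (fun a => q a * - ln (q a)).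
Proof.
move=> q_ge0 q_sum1 q_max.
have [hZ hentropy] := entropy_ge_neg_ln_collision q_ge0 q_sum1.
have [hZm hZsq] := collision_le_max q_ge0 q_sum1 q_max.
have hm1 : q f <= 1.
  by rewrite -q_sum1; apply: rsum_term_le => // a _; apply: q_ge0.
exact: Rle_trans (neg_ln_collision_ge hZ hZm hZsq hm1) hentropy.
Qed.

Lemma map_error_le_entropy p f :
  (forall a, 0 <= p a) ->
  (forall a, p a / rsum predT p <= p f / rsum predT p) ->
  rsum predT p - p f <=
    / (2 * ln 2) * rsum predT (fun a => p a * - ln (p a / rsum predT p)).
Proof.
move=> p_ge0 p_max; have [l0 _] := ln2_bounds.
have p_le_total a : p a <= rsum predT p by apply: rsum_term_le => // b _; apply: p_ge0.
set P := rsum predT p in p_max p_le_total *.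
have [hP|P0] : 0 <= P by apply: rsum_ge0 => a _; apply: p_ge0.
- set q := fun a => p a / P.
  have q_ge0 a : 0 <= q a.
    by apply: Rmult_le_pos; [apply: p_ge0 | apply/Rlt_le/Rinv_0_lt_compat].
  have q_sum1 : rsum predT q = 1.
    rewrite (rsum_eq (G := fun a => / P * p a)); last by move=> a _; rewrite /q /Rdiv Rmult_comm.
    by rewrite -rsum_mull Rinv_l //; lra.
  have entropy_scaled : rsum predT (fun a => p a * - ln (p a / P)) =
      P * rsum predT (fun a => q a * - ln (q a)).
    by rewrite rsum_mull; apply: rsum_eq => a _; rewrite /q; field; lra.
  have := map_error_entropy_normalized q_ge0 q_sum1 p_max.
  rewrite entropy_scaled /q => h.
  have -> : P - p f = / (2 * ln 2) * (P * (2 * ln 2 * (1 - p f / P))) by field; lra.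
  apply: Rmult_le_compat_l; first by apply/Rlt_le/Rinv_0_lt_compat; lra.
  by apply: Rmult_le_compat_l; lra.
-
  have p0 a : p a = 0 by have := p_le_total a; have := p_ge0 a; lra.
  rewrite p0 -P0 (rsum_eq (G := fun _ => 0)) ?rsum0; first lra.
  by move=> a _; rewrite p0; ring.
Qed.
End Distribution.

Lemma prefix_local (X : finType) n (c c' : {ffun 'I_n -> X}) (i : 'I_n) :
  (forall j : 'I_n, (j < i)%N -> c j = c' j) -> Defs.prefix c i = Defs.prefix c' i.
Proof.
move=> hcc'; rewrite /Defs.prefix; apply/eq_in_map => j.
by rewrite mem_filter => /andP[hj _]; apply: hcc'.
Qed.

Section ChainRule.
Variables (X : finType) (n : nat) (w : 'I_n -> {ffun 'I_n -> X} -> R).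

Definition upd (c : {ffun 'I_n -> X}) (i : 'I_n) (a : X) : {ffun 'I_n -> X} :=
  [ffun j => if j == i then a else c j].

Hypothesis w_local : forall (i : 'I_n) (c c' : {ffun 'I_n -> X}),
  (forall j : 'I_n, (j <= i)%N -> c j = c' j) -> w i c = w i c'.
Hypothesis w_sum1 : forall (i : 'I_n) (c : {ffun 'I_n -> X}),
  rsum predT (fun a => w i (upd c i a)) = 1.

Definition agree (m : nat) (c c' : {ffun 'I_n -> X}) : bool :=
  [forall j : 'I_n, (j < m)%N ==> (c' j == c j)].

Definition tail_mass (m : nat) (c : {ffun 'I_n -> X}) : R :=
  rsum (agree m c) (fun c' => rprod (fun i : 'I_n => (m <= i)%N) (fun i => w i c')).

Lemma tail_mass_end c : tail_mass n c = 1.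
Proof.
rewrite /tail_mass /rsum (eq_bigl (pred1 c)); last first.
  move=> c'; apply/forallP/eqP => [h|->]; last by move=> j; apply/implyP.
  by apply/ffunP => j; have := h j; rewrite ltn_ord => /eqP.
by rewrite big_pred1_eq /rprod big_pred0 // => i; rewrite leqNgt ltn_ord.
Qed.

Lemma agree_succ m (hm : (m < n)%N) c c' a :
  let im := Ordinal hm in
  agree m c c' && (c' im == a) = agree m.+1 (upd c im a) c'.
Proof.
move=> im; apply/andP/forallP => [[/forallP h /eqP ha] j|h].
  apply/implyP => hj; rewrite ffunE; case: (eqVneq j im) => [->|hne]; first exact/eqP.
  apply: (implyP (h j)); rewrite ltn_neqAle -ltnS hj andbT.
  by apply: contra hne => /eqP hjm; apply/eqP/val_inj.
split; last by have := implyP (h im) (ltnSn m); rewrite ffunE eqxx.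
apply/forallP => j; apply/implyP => hj; have := implyP (h j) (ltnW hj).
by rewrite ffunE; case: (eqVneq j im) => [hji|//]; rewrite hji ltnn in hj.
Qed.

Lemma tail_mass_step m (hm : (m < n)%N) c :
  let im := Ordinal hm in
  tail_mass m c = rsum predT (fun a => w im (upd c im a) * tail_mass m.+1 (upd c im a)).
Proof.
move=> im.
have split_first c' : rprod (fun i : 'I_n => (m <= i)%N) (fun i => w i c') =
    w im c' * rprod (fun i : 'I_n => (m.+1 <= i)%N) (fun i => w i c').
  rewrite /rprod (bigD1 im) //=; congr (_ * _); apply: eq_bigl => i.
  by rewrite ltn_neqAle andbC -val_eqE eq_sym.
rewrite /tail_mass (rsum_eq (fun c' _ => split_first c')).
rewrite /rsum (partition_big (fun c' : {ffun 'I_n -> X} => c' im) predT) //.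
apply: eq_bigr => a _; rewrite rsum_mull; apply: eq_big => c'; first exact: agree_succ.
rewrite agree_succ => /forallP h; congr (_ * _); apply: w_local => j hj.
by apply/eqP/(implyP (h j)).
Qed.

Lemma tail_mass_one k : forall m c, (m + k = n)%N -> tail_mass m c = 1.
Proof.
elim: k => [|k IH] m c hmk; first by rewrite addn0 in hmk; rewrite hmk tail_mass_end.
have hm : (m < n)%N by rewrite -hmk addnS ltnS leq_addr.
rewrite (tail_mass_step hm) -(w_sum1 (Ordinal hm) c); apply: rsum_eq => a _.
by rewrite IH ?Rmult_1_r // addSnnS.
Qed.

Lemma chain_sum (c0 : {ffun 'I_n -> X}) :
  rsum predT (fun c => rprod predT (fun i => w i c)) = 1.
Proof.
rewrite -(@tail_mass_one n 0 c0) ?addn0 // /tail_mass /rsum.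
by apply: eq_big => c //; apply/esym/forallP.
Qed.
End ChainRule.

Lemma one_sub_rprod_le (I : finType) (P : pred I) (a : I -> R) :
  (forall i, P i -> 0 <= a i <= 1) ->
  1 - rprod P a <= rsum P (fun i => 1 - a i).
Proof.
move=> ha.
suff : 0 <= rprod P a <= 1 /\ 1 - rprod P a <= rsum P (fun i => 1 - a i) by case.
rewrite /rprod /rsum; elim/big_rec2: _ => [|i s p Pi [hp hs]]; first lra.
by have := ha i Pi; split; nra.
Qed.

Section ExtendedCodeword.
Variables (X Y : finType) (n : nat).
Variable mu : {ffun 'I_n -> X} -> {ffun 'I_n -> Y} -> R.
Variable T : {ffun 'I_n -> X} -> {ffun 'I_n -> X}.
Hypothesis mu_ge0 : forall x y, 0 <= mu x y.

Local Notation pref x i := (Defs.prefix (T x) i).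

Definition Hln (i : 'I_n) : R :=
  rsum predT (fun x => rsum predT (fun y =>
    mu x y * - ln (cond mu T i (T x i) (pref x i) y))).

Lemma Hcond_Hln i : Hcond mu T i = / ln (INR #|X|) * Hln i.
Proof.
rewrite /Hcond /Hln rsum_mull; apply: rsum_eq => x _.
by rewrite rsum_mull; apply: rsum_eq => y _; rewrite /logX /Rdiv; ring.
Qed.

Lemma Pr_pref_a_le i s a y : Pr_pref_a mu T i s a y <= Pr_pref mu T i s y.
Proof.
apply: rsum_le => x _.
by case: (_ == s); case: (_ == a) => /=; have := mu_ge0 x y; lra.
Qed.

Lemma Pr_pref_a_ge0 i s a y : 0 <= Pr_pref_a mu T i s a y.
Proof. by apply: rsum_ge0 => x _; case: ifP => _; [apply: mu_ge0 | lra]. Qed.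

Lemma Pr_pref_a_sum i s y :
  rsum predT (fun a => Pr_pref_a mu T i s a y) = Pr_pref mu T i s y.
Proof.
rewrite /Pr_pref_a -rsum_exchange; apply: rsum_eq => x _.
case: (_ == s) => /=; last by rewrite rsum0.
by rewrite (rsum_eq (G := fun a => if T x i == a then mu x y else 0)) ?rsum_delta.
Qed.

Lemma cell_sum i s y (phi : X -> R) :
  rsum predT (fun x => if pref x i == s then mu x y * phi (T x i) else 0) =
  rsum predT (fun a => Pr_pref_a mu T i s a y * phi a).
Proof.
rewrite (rsum_eq (F := fun a => _ * _) (G := fun a => rsum predT (fun x =>
  if (pref x i == s) && (T x i == a) then mu x y * phi a else 0))); last first.
  by move=> a _; rewrite Rmult_comm rsum_mull; apply: rsum_eq => x _; case: ifP => _; ring.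
rewrite rsum_exchange; apply: rsum_eq => x _.
case: (_ == s) => /=; last by rewrite rsum0.
rewrite (rsum_eq (G := fun a => if T x i == a then mu x y * phi (T x i) else 0)).
  by rewrite rsum_delta.
by move=> a _; case: eqP => [->|].
Qed.

Lemma mu_le_Pr_pref_a x y i : mu x y <= Pr_pref_a mu T i (pref x i) (T x i) y.
Proof.
have := @rsum_term_le _ predT (fun x' => if (pref x' i == pref x i) && (T x' i == T x i)
   then mu x' y else 0) x isT.
by rewrite !eqxx /=; apply=> x' _; case: ifP => _; [apply: mu_ge0 | lra].
Qed.

Lemma cond_bounds x y i : 0 < mu x y ->
  0 < Pr_pref mu T i (pref x i) y /\ 0 < cond mu T i (T x i) (pref x i) y <= 1.
Proof.
move=> hmu; have h1 := mu_le_Pr_pref_a x y i.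
have h2 := Pr_pref_a_le i (pref x i) (T x i) y.
have hP : 0 < Pr_pref mu T i (pref x i) y by lra.
split=> //; rewrite /cond; split; first by apply: Rdiv_lt_0_compat; lra.
by apply: (Rmult_le_reg_r _ _ _ hP); rewrite /Rdiv Rmult_assoc Rinv_l; lra.
Qed.

Lemma map_position_error (i : 'I_n) (f : seq X -> {ffun 'I_n -> Y} -> X) :
  (forall s y a, cond mu T i a s y <= cond mu T i (f s y) s y) ->
  rsum predT (fun x => rsum predT (fun y =>
    if f (pref x i) y != T x i then mu x y else 0)) <= / (2 * ln 2) * Hln i.
Proof.
move=> f_map; rewrite /Hln rsum_exchange [X in _ <= _ * X]rsum_exchange rsum_mull.
apply: rsum_le => y _.
rewrite rsum_mull.
apply: (rsum_le_by_cells (key := fun x => pref x i)) => s.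
set p := fun a => Pr_pref_a mu T i s a y.
have p_total : rsum predT p = Pr_pref mu T i s y by apply: Pr_pref_a_sum.
rewrite (rsum_eq (G := fun x => if pref x i == s then
    mu x y * (if f s y != T x i then 1 else 0) else 0)); last first.
  by move=> x _; case: eqP => [->|//]; case: ifP => _; ring.
rewrite [X in _ <= X](rsum_eq (G := fun x => if pref x i == s then
    mu x y * (/ (2 * ln 2) * - ln (p (T x i) / rsum predT p)) else 0)); last first.
  by move=> x _; case: eqP => [->|//]; rewrite p_total /cond /p; ring.
rewrite (cell_sum i s y (fun a => if f s y != a then 1 else 0)).
rewrite (cell_sum i s y (fun a => / (2 * ln 2) * - ln (p a / rsum predT p))) -/p.
rewrite (rsum_eq (G := fun a => if f s y != a then p a else 0)); last first.
  by move=> a _; rewrite /p; case: ifP => _; ring.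
rewrite [X in _ <= X](rsum_eq (G := fun a => / (2 * ln 2) * (p a * - ln (p a / rsum predT p))));
  last by move=> a _; rewrite /p; ring.
rewrite -rsum_mull -rsum_drop_one; apply: map_error_le_entropy => [a|a].
  exact: Pr_pref_a_ge0.
by rewrite p_total; apply: f_map.
Qed.

Variable g : 'I_n -> seq X -> {ffun 'I_n -> Y} -> X -> R.
Hypothesis g_ge0 : forall i s y a, 0 <= g i s y a.
Hypothesis g_sum1 : forall i s y, rsum predT (fun a => g i s y a) = 1.

Lemma ssc_step_sum1 i s y : rsum predT (fun a => ssc_step mu T g i a s y) = 1.
Proof.
rewrite /ssc_step; case: Req_EM_T => hP; first exact: g_sum1.
rewrite (rsum_eq (G := fun a => / Pr_pref mu T i s y * Pr_pref_a mu T i s a y)).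
  by rewrite -rsum_mull Pr_pref_a_sum; field.
by move=> a _; rewrite /cond /Rdiv Rmult_comm.
Qed.

Lemma ssc_step_nonnull i a s y :
  Pr_pref mu T i s y <> 0 -> ssc_step mu T g i a s y = cond mu T i a s y.
Proof. by rewrite /ssc_step; case: Req_EM_T. Qed.

Lemma ssc_step_ge0 i a s y : 0 <= ssc_step mu T g i a s y.
Proof.
rewrite /ssc_step; case: Req_EM_T => hP; first exact: g_ge0.
apply: Rmult_le_pos; first exact: Pr_pref_a_ge0.
have P_ge0 : 0 <= Pr_pref mu T i s y.
  by apply: Rle_trans (Pr_pref_a_le i s a y); apply: Pr_pref_a_ge0.
by apply/Rlt_le/Rinv_0_lt_compat; lra.
Qed.

Lemma ssc_step_le1 i a s y : ssc_step mu T g i a s y <= 1.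
Proof.
rewrite -(ssc_step_sum1 i s y).
by apply: (@rsum_term_le _ predT _ a) => // b _; apply: ssc_step_ge0.
Qed.

(* Per-position SSC estimate: the probability that the draw at position [i]
   misses [C_i] (given the true prefix) is at most [H(C_i | C_1^{i-1}, Y) / ln 2]
   in nats, since [1 - q <= - ln q] for a conditional probability [q]. *)
Lemma ssc_position_error i :
  rsum predT (fun x => rsum predT (fun y =>
    mu x y * (1 - ssc_step mu T g i (T x i) (pref x i) y))) <= / ln 2 * Hln i.
Proof.
have [l0 l1] := ln2_bounds.
have inv_ln2 : 1 <= / ln 2.
  by rewrite -Rinv_1; apply: Rinv_le_contravar; lra.
rewrite /Hln rsum_mull; apply: rsum_le => x _.
rewrite rsum_mull; apply: rsum_le => y _.
case: (mu_ge0 x y) => [hmu|<-]; last lra.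
have [hP [hq0 hq1]] := cond_bounds i hmu.
rewrite ssc_step_nonnull; last lra.
set q := cond mu T i (T x i) (pref x i) y in hq0 hq1 *.
have hln := ln_le_sub1 hq0.
rewrite (Rmult_comm (/ ln 2)) Rmult_assoc; apply: Rmult_le_compat_l; first lra.
rewrite -[X in X <= _]Rmult_1_r; apply: Rmult_le_compat; lra.
Qed.
End ExtendedCodeword.

Lemma filter_enum_take n k : (k <= n)%N ->
  [seq j <- enum 'I_n | (nat_of_ord j < k)%N] = take k (enum 'I_n).
Proof.
move=> hk; apply: (inj_map val_inj).
rewrite map_take val_enum_ord take_iota (minn_idPl hk).
by rewrite -(@filter_iota_ltn 0 n k hk) -val_enum_ord filter_map.
Qed.

Lemma agree_on_set_indicator (I X : finType) (S : {set I}) (c c0 : I -> X) :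
  (if [seq c i | i <- enum S] == [seq c0 i | i <- enum S] then 1 else 0) =
  rprod (fun i => i \in S) (fun i => if c i == c0 i then 1 else 0).
Proof.
case: (boolP [forall i in S, c i == c0 i]) => hall.
  have -> : [seq c i | i <- enum S] == [seq c0 i | i <- enum S].
    by apply/eqP/eq_in_map => i; rewrite mem_enum => hi; apply/eqP/(forall_inP hall).
  by rewrite /rprod big1 // => i hi; rewrite (eqP (forall_inP hall i hi)) eqxx.
case/forall_inPn: hall => i hi hne.
have -> : ([seq c i | i <- enum S] == [seq c0 i | i <- enum S]) = false.
  apply/negbTE/negP => /eqP/eq_in_map/(_ i); rewrite mem_enum => /(_ hi) hc.
  by rewrite hc eqxx in hne.
by rewrite /rprod (bigD1 i) //= (negbTE hne) Rmult_0_l.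
Qed.

Section Decoders.
Variables (X Y : finType) (n l : nat).
Variable mu : {ffun 'I_n -> X} -> {ffun 'I_n -> Y} -> R.
Hypothesis mu_ge0 : forall x y, 0 <= mu x y.
Variable I1 : {set 'I_n}.
Variable A : {ffun 'I_n -> X} -> {ffun 'I_l -> X}.
Variables T Tinv : {ffun 'I_n -> X} -> {ffun 'I_n -> X}.
Hypothesis hTA : forall x, [seq T x i | i <- enum I1] = codom (A x).
Hypotheses (hT1 : cancel T Tinv) (hT2 : cancel Tinv T).

Local Notation pref x i := (Defs.prefix (T x) i).

Variables (x0 : X) (f : 'I_n -> seq X -> {ffun 'I_n -> Y} -> X).
Hypothesis f_map : forall i, i \notin I1 -> forall s y a,
  cond mu T i a s y <= cond mu T i (f i s y) s y.

Lemma sc_dec_correct x y :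
  (forall i, i \notin I1 -> f i (pref x i) y = T x i) ->
  sc_dec I1 Tinv x0 f (A x) y = x.
Proof.
move=> f_ok; set step := fun s i => rcons s (if i \in I1
  then nth (f i s y) (codom (A x)) (index i (enum I1)) else f i s y).
(* invariant: after [k] steps the decoder has output [C_1^k] *)
have partial k : (k <= n)%N ->
    foldl step [::] (take k (enum 'I_n)) = map (T x) (take k (enum 'I_n)).
  elim: k => [|k IH] hk; first by rewrite take0.
  have hsz : (k < size (enum 'I_n))%N by rewrite size_enum_ord.
  rewrite (take_nth (Ordinal hk) hsz) foldl_rcons IH ?(ltnW hk) // map_rcons.
  set i := nth (Ordinal hk) (enum 'I_n) k.
  have hi : i = Ordinal hk by rewrite /i (nth_ord_enum (Ordinal hk) (Ordinal hk)).
  rewrite /step; congr rcons; case: ifP => hI.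
    rewrite -hTA (nth_map i); last by rewrite index_mem mem_enum.
    by rewrite nth_index // mem_enum.
  have -> : map (T x) (take k (enum 'I_n)) = pref x i.
    by rewrite /Defs.prefix hi /= filter_enum_take // ltnW.
  by apply: f_ok; rewrite hI.
rewrite /sc_dec /sc_hat -/step.
have := partial n (leqnn n); rewrite take_oversize ?size_enum_ord // => ->.
have -> : seq_to_vec n x0 [seq T x i | i <- enum 'I_n] = T x.
  apply/ffunP => j; rewrite ffunE (nth_map j) ?size_enum_ord //.
  by rewrite nth_ord_enum.
by rewrite hT1.
Qed.

Lemma sc_error_union_bound x y :
  (if sc_dec I1 Tinv x0 f (A x) y != x then mu x y else 0) <=
  rsum (fun i => i \notin I1) (fun i => if f i (pref x i) y != T x i then mu x y else 0).
Proof.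
have terms_ge0 i : 0 <= if f i (pref x i) y != T x i then mu x y else 0.
  by case: ifP => _; [apply: mu_ge0 | lra].
case: (boolP [forall i, (i \notin I1) ==> (f i (pref x i) y == T x i)]) => hall.
  rewrite sc_dec_correct ?eqxx; first by apply: rsum_ge0.
  by move=> i hi; apply/eqP/(implyP (forallP hall i) hi).
move/forallPn: hall => [i]; rewrite negb_imply => /andP[hi hne].
apply: Rle_trans (rsum_term_le (i0 := i) hi (fun j _ => terms_ge0 j)).
by rewrite hne; case: ifP => _; have := mu_ge0 x y; lra.
Qed.

Lemma sc_error_bound :
  rsum predT (fun x => rsum predT (fun y =>
      if sc_dec I1 Tinv x0 f (A x) y != x then mu x y else 0))
    <= / (2 * ln 2) * rsum (fun i => i \notin I1) (Hln mu T).
Proof.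
apply: Rle_trans (_ : rsum predT (fun x => rsum predT (fun y =>
    rsum (fun i => i \notin I1) (fun i =>
      if f i (pref x i) y != T x i then mu x y else 0))) <= _).
  apply: rsum_le => x _; apply: rsum_le => y _.
  exact: sc_error_union_bound.
under rsum_eq => x _ do rewrite -rsum_exchange.
rewrite -rsum_exchange rsum_mull; apply: rsum_le => i hi.
exact: map_position_error (f_map hi).
Qed.

Variable g : 'I_n -> seq X -> {ffun 'I_n -> Y} -> X -> R.
Hypothesis g_ge0 : forall i s y a, 0 <= g i s y a.
Hypothesis g_sum1 : forall i s y, rsum predT (fun a => g i s y a) = 1.

Definition ssc_factor x y (i : 'I_n) (c : {ffun 'I_n -> X}) : R :=
  if i \in I1 then (if c i == T x i then 1 else 0)
  else ssc_step mu T g i (c i) (Defs.prefix c i) y.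

Lemma ssc_law_factor x y c :
  ssc_law mu T I1 g (A x) y c = rprod predT (fun i => ssc_factor x y i c).
Proof.
rewrite /ssc_law -hTA agree_on_set_indicator /rprod [RHS](bigID (fun i => i \in I1)) /=.
congr (_ * _); apply: eq_bigr => i hi; rewrite /ssc_factor ?hi //.
by rewrite (negbTE hi).
Qed.

Lemma ssc_law_sum1 x y : rsum predT (ssc_law mu T I1 g (A x) y) = 1.
Proof.
rewrite (rsum_eq (fun c _ => ssc_law_factor x y c)); apply: (chain_sum _ _ (T x)).
- move=> i c c' hcc'; rewrite /ssc_factor (hcc' i (leqnn i)).
  case: (i \in I1) => //; congr ssc_step; apply: prefix_local => j hj.
  exact/hcc'/ltnW.
- move=> i c; rewrite /ssc_factor; case: (i \in I1).
    rewrite -[RHS](rsum_delta (T x i) 1); apply: rsum_eq => a _.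
    by rewrite /upd ffunE eqxx eq_sym.
  rewrite -(ssc_step_sum1 mu T g_sum1 i (Defs.prefix c i) y); apply: rsum_eq => a _.
  rewrite /upd ffunE eqxx; congr ssc_step; apply: prefix_local => j hj.
  by rewrite ffunE; case: eqP => // hji; rewrite hji ltnn in hj.
Qed.

Lemma ssc_err_complement x y :
  ssc_err mu T I1 Tinv g (A x) y x =
  1 - rprod (fun i => i \notin I1) (fun i => ssc_step mu T g i (T x i) (pref x i) y).
Proof.
have law_Tx : ssc_law mu T I1 g (A x) y (T x) =
    rprod (fun i => i \notin I1) (fun i => ssc_step mu T g i (T x i) (pref x i) y).
  by rewrite /ssc_law hTA eqxx Rmult_1_l.
rewrite -(ssc_law_sum1 x y) -law_Tx rsum_drop_one /ssc_err; apply: rsum_eq => c _.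
suff -> : (Tinv c != x) = (T x != c) by [].
by congr negb; apply/eqP/eqP => [<-|<-]; [rewrite hT2 | rewrite hT1].
Qed.

(* Union bound for SSC, through the Weierstrass product inequality. *)
Lemma ssc_error_union_bound x y :
  mu x y * ssc_err mu T I1 Tinv g (A x) y x <=
  rsum (fun i => i \notin I1)
    (fun i => mu x y * (1 - ssc_step mu T g i (T x i) (pref x i) y)).
Proof.
rewrite ssc_err_complement -rsum_mull; apply: Rmult_le_compat_l; first exact: mu_ge0.
by apply: one_sub_rprod_le => i _; split; [apply: ssc_step_ge0 | apply: ssc_step_le1].
Qed.

Lemma ssc_error_bound :
  rsum predT (fun x => rsum predT (fun y => mu x y * ssc_err mu T I1 Tinv g (A x) y x))
    <= / ln 2 * rsum (fun i => i \notin I1) (Hln mu T).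
Proof.
apply: Rle_trans (_ : rsum predT (fun x => rsum predT (fun y =>
    rsum (fun i => i \notin I1) (fun i =>
      mu x y * (1 - ssc_step mu T g i (T x i) (pref x i) y)))) <= _).
  by apply: rsum_le => x _; apply: rsum_le => y _; apply: ssc_error_union_bound.
under rsum_eq => x _ do rewrite -rsum_exchange.
rewrite -rsum_exchange rsum_mull; apply: rsum_le => i _.
exact: ssc_position_error.
Qed.
End Decoders.

Lemma entropy_base_change (X Y : finType) (n : nat) (hX : (2 <= #|X|)%N)
  (mu : {ffun 'I_n -> X} -> {ffun 'I_n -> Y} -> R)
  (T : {ffun 'I_n -> X} -> {ffun 'I_n -> X}) (P : pred 'I_n) (c : R) :
  0 < c ->
  1 / (c * logX X 2) * rsum P (Hcond mu T) = / (c * ln 2) * rsum P (Hln mu T).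
Proof.
move=> c_pos; have [l0 _] := ln2_bounds.
have L_pos : 0 < ln (INR #|X|).
  rewrite -ln_1; apply: ln_increasing; first lra.
  by apply: (Rlt_le_trans _ 2); [lra | apply: (le_INR 2); apply/leP].
rewrite (rsum_eq (fun i _ => Hcond_Hln mu T i)) -rsum_mull /logX.
by field; lra.
Qed.

Unset Implicit Arguments.
Set Strict Implicit.

Theorem lemma4 (X Y : finType) (n l : nat)
  (hX : (2 <= #|X|)%N)
  (mu : {ffun 'I_n -> X} -> {ffun 'I_n -> Y} -> R)
  (mu_ge0 : forall x y, (0 <= mu x y))
  (mu_sum1 : rsum predT (fun x => rsum predT (fun y => mu x y)) = 1)
  (I1 : {set 'I_n}) (hI1 : #|I1| = l)
  (A : {ffun 'I_n -> X} -> {ffun 'I_l -> X})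
  (B : {ffun 'I_n -> X} -> {ffun 'I_(n - l) -> X})
  (T Tinv : {ffun 'I_n -> X} -> {ffun 'I_n -> X})
  (hTA : forall x, [seq T x i | i <- enum I1] = codom (A x))
  (hTB : forall x, [seq T x i | i <- enum (~: I1)] = codom (B x))
  (hT1 : cancel T Tinv) (hT2 : cancel Tinv T)
  (x0 : X)
  (f : 'I_n -> seq X -> {ffun 'I_n -> Y} -> X)
  (hf : forall i, i \notin I1 -> forall s y a,
          (cond mu T i a s y <= cond mu T i (f i s y) s y))
  (g : 'I_n -> seq X -> {ffun 'I_n -> Y} -> X -> R)
  (g_ge0 : forall i s y a, (0 <= g i s y a))
  (g_sum1 : forall i s y, rsum predT (fun a => g i s y a) = 1) :
  (rsum predT (fun x => rsum predT (fun y =>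
       if sc_dec I1 Tinv x0 f (A x) y != x then mu x y else 0))
     <= 1 / (2 * logX X 2) * rsum (fun i => i \notin I1) (Hcond mu T))
  /\
  (rsum predT (fun x => rsum predT (fun y =>
       mu x y * ssc_err mu T I1 Tinv g (A x) y x))
     <= 1 / logX X 2 * rsum (fun i => i \notin I1) (Hcond mu T)).
Proof.
split.
- rewrite entropy_base_change //; last lra.
  exact (sc_error_bound mu_ge0 hTA hT1 x0 hf).
- rewrite -[logX X 2]Rmult_1_l entropy_base_change //; last lra.
  rewrite Rmult_1_l; exact (ssc_error_bound mu_ge0 hTA hT1 hT2 g_ge0 g_sum1).
Qed.
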